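(* Let $L$ be a C-lattice domain in which every element is a join of principal elements. If $L$ is sharp, then $L$ is a Prüfer lattice, i.e. every compact element of $L$ is principal.
   Context: A multiplicative lattice is a complete lattice $(L,\le)$ with bottom $0$ and top $1$ which is also a commutative monoid with identity $1$ such that $a(\bigvee_\alpha b_\alpha)=\bigvee_\alpha(ab_\alpha)$ for all $a,b_\alpha\in L$. For $x,y\in L$, $(y:x)=\bigvee\{a\in L: ax\le y\}$. An element $c$ is compact if $c\le\bigvee S$ implies $c\le\bigvee T$ for some finite $T\subseteq S$. A C-lattice is a multiplicative lattice in which $1$ is compact, the product of two compact elements is compact, and every element is a join of compact elements. A proper element $p\ne1$ is prime if $xy\le p$ implies $x\le p$ or $y\le p$; $L$ is a domain if $0$ is prime. An element $x$ is principal if $y\wedge zx=((y:x)\wedge z)x$ and $y\vee(z:x)=((yx\vee z):x)$ for all $y,z\in L$. $L$ is sharp if whenever $a_1a_2\le b$ with $a_1,a_2,b\in L$, there exist $b_1,b_2\in L$ with $a_i\le b_i$ ($i=1,2$) and $b=b_1b_2$. *)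

From Stdlib Require Import List.

Record mult_lattice := MultLattice {
  car :> Type;
  le : car -> car -> Prop;
  sup : (car -> Prop) -> car;
  mul : car -> car -> car;
  zero : car;
  one : car;
  le_refl : forall x, le x x;
  le_trans : forall x y z, le x y -> le y z -> le x z;
  le_antisym : forall x y, le x y -> le y x -> x = y;
  sup_ub : forall (S : car -> Prop) x, S x -> le x (sup S);
  sup_least : forall (S : car -> Prop) y, (forall x, S x -> le x y) -> le (sup S) y;
  zero_bot : forall x, le zero x;
  one_top : forall x, le x one;
  mulA : forall x y z, mul x (mul y z) = mul (mul x y) z;
  mulC : forall x y, mul x y = mul y x;
  mul1 : forall x, mul one x = x;
  mul_sup : forall a (S : car -> Prop),
      mul a (sup S) = sup (fun z => exists s, S s /\ z = mul a s)
}.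

Section Notions.
Variable L : mult_lattice.

Definition ljoin (x y : L) : L := sup L (fun z => z = x \/ z = y).
Definition lmeet (x y : L) : L := sup L (fun z => le L z x /\ le L z y).

Definition res (y x : L) : L := sup L (fun a => le L (mul L a x) y).

Definition compact (c : L) : Prop :=
  forall S : L -> Prop, le L c (sup L S) ->
    exists T : list L, (forall t, In t T -> S t) /\
                       le L c (sup L (fun t => In t T)).

Definition C_lattice : Prop :=
  compact (one L) /\
  (forall a b, compact a -> compact b -> compact (mul L a b)) /\
  (forall x : L, exists S : L -> Prop, (forall s, S s -> compact s) /\ x = sup L S).

Definition prime (p : L) : Prop :=
  p <> one L /\ forall x y, le L (mul L x y) p -> le L x p \/ le L y p.

Definition lattice_domain : Prop := prime (zero L).

Definition principal (x : L) : Prop :=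
  (forall y z, lmeet y (mul L z x) = mul L (lmeet (res y x) z) x) /\
  (forall y z, ljoin y (res z x) = res (ljoin (mul L y x) z) x).

Definition sharp : Prop :=
  forall a1 a2 b, le L (mul L a1 a2) b ->
    exists b1 b2, le L a1 b1 /\ le L a2 b2 /\ b = mul L b1 b2.

Definition principally_generated : Prop :=
  forall x : L, exists S : L -> Prop, (forall s, S s -> principal s) /\ x = sup L S.

Definition prufer : Prop := forall c : L, compact c -> principal c.

End Notions.

From Stdlib Require Import List Classical.

(* It suffices that joins of two principal elements are principal: a compact
   element is then a finite join of principal elements.  For nonzero principal
   x, y with c = x ⊔ y, sharpness applied to c (xy : c) <= xy gives
   xy = u w with c <= u and (xy : c) <= w.  In a domain a factor of a nonzero
   principal element is principal, so u is principal and x = x' u, y = y' u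
   with x', y' principal; the choice of w forces x' ⊓ y' <= x' y'.  A second
   use of sharpness, on (x' ⊔ y')^2 <= x'^2 ⊔ y', shows that such principal
   elements are comaximal, whence c = u (x' ⊔ y') = u. *)

Notation "x <== y" := (le _ x y) (at level 70).
Notation "x ** y" := (mul _ x y) (at level 40, left associativity).
Notation "x ⊔ y" := (ljoin _ x y) (at level 50, left associativity).
Notation "x ⊓ y" := (lmeet _ x y) (at level 50, left associativity).

Section Lattice.
Variable L : mult_lattice.
Implicit Types a b m x y z : L.

Lemma sup_ext (S T : L -> Prop) : (forall x, S x <-> T x) -> sup L S = sup L T.
Proof.
  intros H; apply le_antisym; apply sup_least; intros x Hx; apply sup_ub, H, Hx.
Qed.

Lemma sup_empty (S : L -> Prop) : (forall x, ~ S x) -> sup L S = zero L.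
Proof.
  intros H; apply le_antisym; [|apply zero_bot].
  apply sup_least; intros x Hx; destruct (H x Hx).
Qed.

Lemma le0_eq x : x <== zero L -> x = zero L.
Proof. intros; apply le_antisym; auto using zero_bot. Qed.

Lemma join_ub1 x y : x <== x ⊔ y.
Proof. apply sup_ub; auto. Qed.

Lemma join_ub2 x y : y <== x ⊔ y.
Proof. apply sup_ub; auto. Qed.

Lemma join_least x y z : x <== z -> y <== z -> x ⊔ y <== z.
Proof. intros; apply sup_least; intros t [-> | ->]; auto. Qed.

Lemma joinC x y : x ⊔ y = y ⊔ x.
Proof. apply sup_ext; tauto. Qed.

Lemma le_join_eq a b : a <== b -> a ⊔ b = b.
Proof. intros; apply le_antisym; [apply join_least|apply join_ub2]; auto using le_refl. Qed.

Lemma meet_lb1 x y : x ⊓ y <== x.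
Proof. apply sup_least; intros t [H _]; auto. Qed.

Lemma meet_lb2 x y : x ⊓ y <== y.
Proof. apply sup_least; intros t [_ H]; auto. Qed.

Lemma meet_glb x y z : z <== x -> z <== y -> z <== x ⊓ y.
Proof. intros; apply sup_ub; auto. Qed.

Lemma meetC x y : x ⊓ y = y ⊓ x.
Proof. apply sup_ext; tauto. Qed.

Lemma le_meet_eq a b : a <== b -> a ⊓ b = a.
Proof. intros; apply le_antisym; [apply meet_lb1|apply meet_glb]; auto using le_refl. Qed.

Lemma sup_cons (a : L) (T : list L) :
  sup L (fun t => In t (a :: T)) = a ⊔ sup L (fun t => In t T).
Proof.
  apply le_antisym.
  - apply sup_least; intros t [<- | Ht]; [apply join_ub1|].
    eapply le_trans; [|apply join_ub2]; apply sup_ub; auto.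
  - apply join_least; [apply sup_ub; left; auto|].
    apply sup_least; intros t Ht; apply sup_ub; right; auto.
Qed.

Lemma mulr1 x : x ** one L = x.
Proof. rewrite mulC; apply mul1. Qed.

Lemma mulAC x y z : x ** y ** z = x ** z ** y.
Proof. rewrite <- mulA, (mulC L y z), mulA; reflexivity. Qed.

Lemma mulr0 x : x ** zero L = zero L.
Proof.
  rewrite <- (sup_empty (fun _ => False)) at 1 by auto.
  rewrite mul_sup; apply sup_empty; intros y [s [[] _]].
Qed.

Lemma mul0r x : zero L ** x = zero L.
Proof. rewrite mulC; apply mulr0. Qed.

Lemma mul_join_r m a b : m ** (a ⊔ b) = m ** a ⊔ m ** b.
Proof.
  unfold ljoin; rewrite mul_sup; apply sup_ext; intros z; split.
  - intros [s [[-> | ->] ->]]; auto.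
  - intros [-> | ->]; eauto.
Qed.

Lemma mul_join_l m a b : (a ⊔ b) ** m = a ** m ⊔ b ** m.
Proof. rewrite mulC, mul_join_r, (mulC L m a), (mulC L m b); reflexivity. Qed.

Lemma mul_mono_r m a b : a <== b -> m ** a <== m ** b.
Proof. intros H; rewrite <- (le_join_eq a b H), mul_join_r; apply join_ub1. Qed.

Lemma mul_mono_l m a b : a <== b -> a ** m <== b ** m.
Proof. intros H; rewrite (mulC L a), (mulC L b); apply mul_mono_r, H. Qed.

Lemma mul_mono a b x y : a <== b -> x <== y -> a ** x <== b ** y.
Proof. intros; apply le_trans with (b ** x); [apply mul_mono_l|apply mul_mono_r]; auto. Qed.

Lemma mul_le_l x y : x ** y <== x.
Proof. rewrite <- (mulr1 x) at 2; apply mul_mono_r, one_top. Qed.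

Lemma mul_le_r x y : x ** y <== y.
Proof. rewrite mulC; apply mul_le_l. Qed.

Lemma join_sq_le x y : (x ⊔ y) ** (x ⊔ y) <== x ** x ⊔ y.
Proof.
  rewrite mul_join_r, mul_join_l; repeat apply join_least.
  - apply join_ub1.
  - eapply le_trans; [apply mul_le_l|apply join_ub2].
  - eapply le_trans; [apply mul_le_r|apply join_ub2].
Qed.

Lemma res_adj a z q : a <== res L z q <-> a ** q <== z.
Proof.
  split; [|intros; apply sup_ub; auto].
  intros H; apply le_trans with (res L z q ** q); [apply mul_mono_l, H|].
  unfold res; rewrite mulC, mul_sup; apply sup_least.
  intros t [s [Hs ->]]; rewrite mulC; exact Hs.
Qed.

Lemma res_mul_le z q : res L z q ** q <== z.
Proof. apply res_adj, le_refl. Qed.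

Lemma res_mul z p q : res L z (p ** q) = res L (res L z q) p.
Proof.
  apply le_antisym; apply res_adj.
  - apply res_adj; rewrite <- mulA; apply res_mul_le.
  - rewrite mulA; apply (proj1 (res_adj _ _ _)), res_mul_le.
Qed.

Definition meet_principal x : Prop :=
  forall y z, y ⊓ (z ** x) = (res L y x ⊓ z) ** x.

Definition join_principal x : Prop :=
  forall y z, y ⊔ res L z x = res L (y ** x ⊔ z) x.

Lemma mul_res_of_le u x : meet_principal u -> x <== u -> res L x u ** u = x.
Proof.
  intros Mu H; specialize (Mu x (one L)).
  rewrite mul1, le_meet_eq, le_meet_eq in Mu by auto using one_top.
  symmetry; exact Mu.
Qed.

Lemma principal_zero : principal L (zero L).
Proof.
  assert (R : forall z, res L z (zero L) = one L).
  { intros z; apply le_antisym; [apply one_top|].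
    apply res_adj; rewrite mulr0; apply zero_bot. }
  split; intros y z.
  - rewrite !mulr0; apply le_antisym; [apply meet_lb2|apply zero_bot].
  - rewrite !R; apply le_antisym; [apply one_top|apply join_ub2].
Qed.

Lemma principal_mul p q : principal L p -> principal L q -> principal L (p ** q).
Proof.
  intros [Mp Jp] [Mq Jq]; split; intros y z.
  - rewrite mulA, Mq, Mp, <- res_mul, <- mulA; reflexivity.
  - rewrite res_mul, Jp, Jq, <- res_mul, <- mulA; reflexivity.
Qed.

Section Domain.
Hypothesis Hdom : lattice_domain L.

Lemma mul_neq0 x y : x <> zero L -> y <> zero L -> x ** y <> zero L.
Proof.
  intros Hx Hy E; destruct (proj2 Hdom x y) as [H|H].
  - rewrite E; apply le_refl.
  - apply Hx, le0_eq, H.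
  - apply Hy, le0_eq, H.
Qed.

Lemma res0_neq0 p : p <> zero L -> res L (zero L) p = zero L.
Proof.
  intros Hp; apply le0_eq, sup_least; intros a Ha.
  destruct (proj2 Hdom a p Ha) as [H|H]; [exact H|].
  destruct (Hp (le0_eq p H)).
Qed.

Lemma mul_cancel_le p u v :
  principal L p -> p <> zero L -> u ** p <== v ** p -> u <== v.
Proof.
  intros [_ Jp] Hp H.
  assert (Hu : u <== v ⊔ res L (zero L) p).
  { rewrite Jp; apply res_adj; eapply le_trans; [exact H|apply join_ub1]. }
  rewrite res0_neq0, joinC, le_join_eq in Hu by auto using zero_bot.
  exact Hu.
Qed.

Section Factor.
Variables a d p : L.
Hypotheses (Pp : principal L p) (Np : p <> zero L) (Ead : a ** d = p).

Lemma meet_principal_factor : meet_principal a.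
Proof.
  intros y z; apply le_antisym.
  - set (w := y ⊓ (z ** a)).
    assert (Hwa : w <== a) by (eapply le_trans; [apply meet_lb2|apply mul_le_r]).
    set (s := res L (w ** d) p).
    assert (Hs : s ** p = w ** d).
    { apply mul_res_of_le; [exact (proj1 Pp)|].
      rewrite <- Ead; apply mul_mono_l, Hwa. }
    assert (Hwp : w ** p = s ** a ** p).
    { rewrite <- Ead at 1; rewrite mulA, mulAC, <- Hs, mulAC; reflexivity. }
    assert (Ew : s ** a = w).
    { apply le_antisym; apply (mul_cancel_le p); auto; rewrite Hwp; apply le_refl. }
    rewrite <- Ew; apply mul_mono_l, meet_glb.
    + apply res_adj; rewrite Ew; apply meet_lb1.
    + apply (mul_cancel_le p); auto.
      rewrite Hs, <- Ead, mulA; apply mul_mono_l, meet_lb2.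
  - apply meet_glb.
    + eapply le_trans; [apply mul_mono_l, meet_lb1|apply res_mul_le].
    + apply mul_mono_l, meet_lb2.
Qed.

Lemma join_principal_factor : join_principal a.
Proof.
  intros y z; apply le_antisym.
  - apply join_least; apply res_adj; [apply join_ub1|].
    eapply le_trans; [apply res_mul_le|apply join_ub2].
  - set (t := res L (y ** a ⊔ z) a).
    assert (Ht : t <== y ⊔ res L (z ** d) p).
    { rewrite (proj2 Pp); apply res_adj.
      rewrite <- Ead, mulA.
      eapply le_trans; [apply mul_mono_l, res_mul_le|].
      rewrite mul_join_l, <- (mulA _ y a d), Ead; apply le_refl. }
    assert (Hzd : res L (z ** d) p <== res L z a).
    { apply res_adj, (mul_cancel_le p); auto.
      rewrite mulAC; eapply le_trans; [apply mul_mono_l, res_mul_le|].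
      rewrite <- mulA, (mulC L d a), Ead; apply le_refl. }
    eapply le_trans; [exact Ht|].
    apply join_least; [apply join_ub1|].
    eapply le_trans; [exact Hzd|apply join_ub2].
Qed.

Lemma principal_factor : principal L a.
Proof. split; [apply meet_principal_factor|apply join_principal_factor]. Qed.

End Factor.

Lemma res_eq_of_coprime x y :
  principal L x -> x <> zero L -> x ⊓ y <== x ** y -> res L y x = y.
Proof.
  intros Px Nx Hxy; apply le_antisym; [|apply res_adj, mul_le_l].
  apply (mul_cancel_le x); auto.
  rewrite (mulC L y x); eapply le_trans; [|exact Hxy].
  apply meet_glb; [apply mul_le_r|apply res_mul_le].
Qed.

Lemma coprime_cofactors x y u w x' y' :
  principal L u -> u <> zero L -> x' ** u = x -> y' ** u = y ->
  res L (x ** y) (x ⊔ y) <== w -> u ** w = x ** y -> x' ⊓ y' <== x' ** y'.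
Proof.
  intros Pu Nu Ex Ey Hw Euw.
  set (r := x' ⊓ y').
  assert (Hrx : r ** u <== x) by (rewrite <- Ex; apply mul_mono_l, meet_lb1).
  assert (Hry : r ** u <== y) by (rewrite <- Ey; apply mul_mono_l, meet_lb2).
  assert (Hrw : r ** u <== w).
  { eapply le_trans; [|exact Hw]; apply res_adj.
    rewrite mul_join_r; apply join_least.
    - rewrite (mulC L x y); apply mul_mono_l, Hry.
    - apply mul_mono_l, Hrx. }
  apply (mul_cancel_le u _ _ Pu Nu), (mul_cancel_le u _ _ Pu Nu).
  eapply le_trans; [apply mul_mono_l, Hrw|].
  rewrite (mulC L w u), Euw, <- Ex, <- Ey, !mulA, (mulAC x' u y').
  apply le_refl.
Qed.

Section Sharp.
Hypothesis Hsh : sharp L.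

Lemma join_eq1_of_coprime x y :
  principal L x -> principal L y -> x <> zero L -> y <> zero L ->
  x ⊓ y <== x ** y -> x ⊔ y = one L.
Proof.
  intros Px Py Nx Ny Hxy.
  assert (Rx : res L (x ** x ⊔ y) x = x ⊔ y).
  { rewrite <- (proj2 Px), res_eq_of_coprime; auto. }
  assert (Ry : res L (y ** y ⊔ x) y = x ⊔ y).
  { rewrite <- (proj2 Py), res_eq_of_coprime, joinC; auto.
    rewrite meetC, mulC; exact Hxy. }
  destruct (Hsh (x ⊔ y) (x ⊔ y) (x ** x ⊔ y)) as [b1 [b2 [H1 [H2 Eb]]]].
  { apply join_sq_le. }
  assert (Hb1 : b1 <== x ⊔ y).
  { rewrite <- Rx; apply res_adj; rewrite Eb.
    apply mul_mono_r; eapply le_trans; [apply join_ub1|exact H2]. }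
  assert (Hb2 : b2 <== x ⊔ y).
  { rewrite <- Rx; apply res_adj; rewrite Eb, (mulC L b1 b2).
    apply mul_mono_r; eapply le_trans; [apply join_ub1|exact H1]. }
  assert (Hy : y <== y ** y ⊔ x).
  { eapply le_trans; [apply join_ub2|]; rewrite Eb.
    eapply le_trans; [apply mul_mono; [exact Hb1|exact Hb2]|].
    rewrite (joinC x y); apply join_sq_le. }
  apply le_antisym; [apply one_top|].
  rewrite <- Ry; apply res_adj; rewrite mul1; exact Hy.
Qed.

Lemma principal_join x y : principal L x -> principal L y -> principal L (x ⊔ y).
Proof.
  intros Px Py.
  destruct (classic (x = zero L)) as [Hx|Nx].
  { rewrite Hx, le_join_eq by apply zero_bot; exact Py. }
  destruct (classic (y = zero L)) as [Hy|Ny].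
  { rewrite Hy, joinC, le_join_eq by apply zero_bot; exact Px. }
  destruct (Hsh (x ⊔ y) (res L (x ** y) (x ⊔ y)) (x ** y)) as [u [w [Hcu [Hw Euw]]]].
  { rewrite mulC; apply res_mul_le. }
  assert (Pu : principal L u).
  { apply (principal_factor u w (x ** y)); auto using principal_mul, mul_neq0. }
  assert (Hxu : x <== u) by (eapply le_trans; [apply join_ub1|exact Hcu]).
  assert (Hyu : y <== u) by (eapply le_trans; [apply join_ub2|exact Hcu]).
  assert (Nu : u <> zero L) by (intros E; apply Nx, le0_eq; rewrite <- E; exact Hxu).
  set (x' := res L x u); set (y' := res L y u).
  assert (Ex : x' ** u = x) by (apply mul_res_of_le; [exact (proj1 Pu)|exact Hxu]).
  assert (Ey : y' ** u = y) by (apply mul_res_of_le; [exact (proj1 Pu)|exact Hyu]).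
  assert (Px' : principal L x') by (apply (principal_factor x' u x); auto).
  assert (Py' : principal L y') by (apply (principal_factor y' u y); auto).
  assert (Nx' : x' <> zero L) by (intros E; apply Nx; rewrite <- Ex, E, mul0r; reflexivity).
  assert (Ny' : y' <> zero L) by (intros E; apply Ny; rewrite <- Ey, E, mul0r; reflexivity).
  assert (E1 : x' ⊔ y' = one L).
  { apply join_eq1_of_coprime; auto.
    apply (coprime_cofactors x y u w); auto. }
  rewrite <- Ex, <- Ey, <- mul_join_l, E1, mul1; exact Pu.
Qed.

Lemma principal_sup_list (T : list L) :
  (forall t, In t T -> principal L t) -> principal L (sup L (fun t => In t T)).
Proof.
  induction T as [|a T IH]; intros HT.
  - rewrite sup_empty by (intros x []); apply principal_zero.
  - rewrite sup_cons; apply principal_join.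
    + apply HT; left; reflexivity.
    + apply IH; intros t Ht; apply HT; right; exact Ht.
Qed.

End Sharp.
End Domain.
End Lattice.

Theorem proposition3p5 (L : mult_lattice) :
  C_lattice L -> lattice_domain L -> principally_generated L ->
  sharp L -> prufer L.
Proof.
  intros _ Hdom Hpg Hsh c Hc.
  destruct (Hpg c) as [S [HS Ec]].
  destruct (Hc S) as [T [HTS HcT]]; [rewrite <- Ec; apply le_refl|].
  replace c with (sup L (fun t => In t T)).
  - apply principal_sup_list; auto.
  - apply le_antisym; [|exact HcT].
    apply sup_least; intros t Ht; rewrite Ec; apply sup_ub, HTS, Ht.
Qed.
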